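(* Let $K=2$ and suppose that for every horizon $T$ (a multiple of $100$) a valid pair $(\eta,\gamma)=(\eta_T,\gamma_T)$ in the non-trivial regime is chosen. Then there exists $T_0$ such that for all $T\ge T_0$, WSU-UX run on the two-phase loss sequence satisfies $$\Pr\bigl(\pi_{T_1+T_2+1,1}\ge\tfrac14\bigr)\ge 1-\frac{2}{T^2},\qquad T_2=\tfrac{2}{10}T.$$
   Context: WSU-UX. Fix integers $K\ge 2$ and $T\ge 1$ and hyperparameters $\eta,\gamma$. The pair $(\eta,\gamma)$ is called valid if $\eta,\gamma\in(0,1/2)$ and $\eta K/\gamma\le 1/2$. Given a fixed loss sequence $\ell_t\in[0,1]^K$, WSU-UX sets $\pi_{1,i}=1/K$ and in each round $t$: forms $\tilde\pi_{t,i}=(1-\gamma)\pi_{t,i}+\gamma/K$; draws $I_t$ with $\Pr(I_t=i\mid\mathcal F_{t-1})=\tilde\pi_{t,i}$; sets $\hat\ell_{t,i}=\ell_{t,i}\mathbf 1[I_t=i]/\tilde\pi_{t,i}$; and updates $\pi_{t+1,i}=\pi_{t,i}\bigl(1-\eta(\hat\ell_{t,i}-\sum_{j}\pi_{t,j}\hat\ell_{t,j})\bigr)$; $\mathcal F_t$ is the history generated by $I_1,\dots,I_t$. Non-trivial regime: $\eta\ge T^{-2/3}$ and $\gamma\le T^{-1/3}$. Two-phase loss sequence ($K=2$, $T$ a multiple of $100$, $T_1=T/100$): $\ell_{t,1}=1,\ell_{t,2}=0$ for $1\le t\le T_1$ and $\ell_{t,1}=0,\ell_{t,2}=1$ for $T_1<t\le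 T$. *)

From Stdlib Require Import Reals Lra Lia List Arith.
Import ListNotations.
Open Scope R_scope.

(* Arms are indexed 0..K-1 (paper's arm i is index i-1); rounds t are 1-based. *)

Definition fsum (K : nat) (g : nat -> R) : R :=
  fold_right Rplus 0 (map g (seq 0 K)).

Definition valid (K : nat) (eta gamma : R) : Prop :=
  0 < eta < 1/2 /\ 0 < gamma < 1/2 /\ eta * INR K / gamma <= 1/2.

Definition nontrivial (T : nat) (eta gamma : R) : Prop :=
  eta >= Rpower (INR T) (-(2/3)) /\ gamma <= Rpower (INR T) (-(1/3)).

Definition tilde_pi (K : nat) (gamma : R) (p : nat -> R) (i : nat) : R :=
  (1 - gamma) * p i + gamma / INR K.

Definition wsu_update (K : nat) (eta gamma : R) (loss : nat -> nat -> R)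
  (t : nat) (p : nat -> R) (I : nat) : nat -> R :=
  let lhat := fun i => if Nat.eqb i I then loss t i / tilde_pi K gamma p i else 0 in
  let avg := fsum K (fun j => p j * lhat j) in
  fun i => p i * (1 - eta * (lhat i - avg)).

(* Expectation of f(pi_{t+n}) given pi_t = p, when the rounds t, ..., t+n-1
   are played: I_s is drawn from tilde pi_s independently of the past given
   the history, exactly as in the algorithm. *)
Fixpoint wsu_expect (K : nat) (eta gamma : R) (loss : nat -> nat -> R)
  (n t : nat) (p : nat -> R) (f : (nat -> R) -> R) : R :=
  match n with
  | O => f p
  | S n' => fsum K (fun i => tilde_pi K gamma p i *
              wsu_expect K eta gamma loss n' (S t) (wsu_update K eta gamma loss t p i) f)
  end.

Definition uniform (K : nat) : nat -> R := fun _ => 1 / INR K.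

Definition indic (P : (nat -> R) -> Prop)
  (dec : forall p, {P p} + {~ P p}) : (nat -> R) -> R :=
  fun p => if dec p then 1 else 0.

(* Probability that pi_{n+1} satisfies P, starting from pi_1 = uniform *)
Definition wsu_prob (K : nat) (eta gamma : R) (loss : nat -> nat -> R) (n : nat)
  (P : (nat -> R) -> Prop) (dec : forall p, {P p} + {~ P p}) : R :=
  wsu_expect K eta gamma loss n 1 (uniform K) (indic P dec).

(* Two-phase loss sequence for K = 2, T1 = T/100 *)
Definition two_phase (T : nat) (t i : nat) : R :=
  if Nat.leb t (T / 100) then (if Nat.eqb i 0 then 1 else 0)
  else (if Nat.eqb i 0 then 0 else 1).

(* event pi_{.,1} >= 1/4 (arm 1 = index 0) *)
Definition arm1_quarter (p : nat -> R) : Prop := 1/4 <= p 0%nat.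
Definition arm1_quarter_dec (p : nat -> R) : {arm1_quarter p} + {~ arm1_quarter p} :=
  Rle_dec (1/4) (p 0%nat).

From Stdlib Require Import Reals Lra Lia List.
Open Scope R_scope.

(* Follow the odds r = pi_2 / pi_1.  When the losses single out one arm, the weights
   move only in the rounds where that arm is drawn, and since validity gives
   2 eta <= tilde_pi_i, one round multiplies E[r] by at most 1 + 2 eta while arm 1 is
   the bad arm and by at most 1 - eta/2 afterwards.  From r_1 = 1, after T/100 + T/5
   rounds E[r] <= exp(-8 eta T/100) <= exp(-2 T^(1/3)/25), using eta >= T^(-2/3).
   On the event pi_1 < 1/4 one has r > 3, so by Markov's inequality the failure
   probability is at most exp(-2 T^(1/3)/25)/3, which is below 2/T^2 once T >= 10^40. *)

Lemma fsum_0 (g : nat -> R) : fsum 0 g = 0.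
Proof. reflexivity. Qed.

Lemma fsum_S (K : nat) (g : nat -> R) : fsum (S K) g = fsum K g + g K.
Proof.
  unfold fsum; rewrite seq_S, map_app, fold_right_app; simpl.
  generalize (map g (seq 0 K)) as l; induction l as [|x l IH]; simpl; [ring|].
  rewrite IH; ring.
Qed.

Lemma fsum2 (g : nat -> R) : fsum 2 g = g 0%nat + g 1%nat.
Proof. rewrite !fsum_S, fsum_0; ring. Qed.

Lemma fsum_le (K : nat) (f g : nat -> R) :
  (forall i, (i < K)%nat -> f i <= g i) -> fsum K f <= fsum K g.
Proof.
  induction K as [|K IH]; intros Hfg; [rewrite !fsum_0; lra|].
  rewrite !fsum_S; apply Rplus_le_compat; [apply IH; intros i Hi|]; apply Hfg; lia.
Qed.

Lemma fsum_ext (K : nat) (f g : nat -> R) :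
  (forall i, (i < K)%nat -> f i = g i) -> fsum K f = fsum K g.
Proof. intros Hfg; apply Rle_antisym; apply fsum_le; intros i Hi; rewrite (Hfg i Hi); lra. Qed.

Lemma fsum_plus (K : nat) (f g : nat -> R) :
  fsum K (fun i => f i + g i) = fsum K f + fsum K g.
Proof. induction K as [|K IH]; rewrite ?fsum_0, ?fsum_S, ?IH; ring. Qed.

Lemma fsum_scal (K : nat) (c : R) (f : nat -> R) :
  fsum K (fun i => c * f i) = c * fsum K f.
Proof. induction K as [|K IH]; rewrite ?fsum_0, ?fsum_S, ?IH; ring. Qed.

Lemma fsum_const (K : nat) (c : R) : fsum K (fun _ => c) = INR K * c.
Proof. induction K as [|K IH]; rewrite ?fsum_0, ?fsum_S, ?IH, ?S_INR; simpl; ring. Qed.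

Definition pos_simplex (K : nat) (p : nat -> R) : Prop :=
  (forall i, (i < K)%nat -> 0 < p i) /\ fsum K p = 1.

Lemma uniform_simplex (K : nat) : (0 < K)%nat -> pos_simplex K (uniform K).
Proof.
  intros HK; assert (0 < INR K) by (apply lt_0_INR, HK).
  unfold uniform; split; [intros i _; apply Rdiv_lt_0_compat; lra|].
  rewrite fsum_const; field; lra.
Qed.

Section Expectation.
Variables (K : nat) (eta gamma : R) (loss : nat -> nat -> R).
Hypothesis K_pos : (0 < K)%nat.
Hypothesis valid_eta_gamma : valid K eta gamma.
Hypothesis loss_bounds : forall t i, 0 <= loss t i <= 1.

Lemma tilde_pi_ge (p : nat -> R) (i : nat) : 0 <= p i -> 2 * eta <= tilde_pi K gamma p i.
Proof.
  intros Hp; destruct valid_eta_gamma as (He & Hg & Heg).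
  assert (HK : 0 < INR K) by (apply lt_0_INR; exact K_pos).
  assert (Hgk : 2 * eta <= gamma / INR K).
  { apply (Rmult_le_reg_r (INR K / gamma)); [apply Rdiv_lt_0_compat; lra|].
    replace (gamma / INR K * (INR K / gamma)) with 1 by (field; lra).
    replace (2 * eta * (INR K / gamma)) with (2 * (eta * INR K / gamma)) by (field; lra).
    lra. }
  unfold tilde_pi; assert (0 <= (1 - gamma) * p i) by (apply Rmult_le_pos; lra); lra.
Qed.

Lemma tilde_pi_nonneg (p : nat -> R) (i : nat) :
  pos_simplex K p -> (i < K)%nat -> 0 <= tilde_pi K gamma p i.
Proof.
  intros [Hpos _] Hi; apply Rle_trans with (2 * eta).
  - destruct valid_eta_gamma; lra.
  - apply tilde_pi_ge; specialize (Hpos i Hi); lra.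
Qed.

Lemma fsum_tilde_pi (p : nat -> R) : fsum K p = 1 -> fsum K (tilde_pi K gamma p) = 1.
Proof.
  intros Hp; unfold tilde_pi.
  rewrite fsum_plus, fsum_scal, fsum_const, Hp.
  field; apply not_0_INR; lia.
Qed.

Lemma wsu_update_simplex (t : nat) (p : nat -> R) (I : nat) :
  pos_simplex K p -> pos_simplex K (wsu_update K eta gamma loss t p I).
Proof.
  intros [Hpos Hsum]; unfold wsu_update.
  set (lhat := fun i => if Nat.eqb i I then loss t i / tilde_pi K gamma p i else 0).
  set (avg := fsum K (fun j => p j * lhat j)).
  change (pos_simplex K (fun i => p i * (1 - eta * (lhat i - avg)))).
  destruct valid_eta_gamma as (He & Hg & Heg).
  assert (Hlhat : forall i, (i < K)%nat -> 0 <= eta * lhat i <= 1/2).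
  { intros i Hi; unfold lhat; destruct (Nat.eqb i I); [|lra].
    pose proof (tilde_pi_ge p i ltac:(specialize (Hpos i Hi); lra)) as Ha.
    pose proof (loss_bounds t i) as Hl.
    replace (eta * (loss t i / tilde_pi K gamma p i))
      with (loss t i * (eta / tilde_pi K gamma p i)) by (field; lra).
    assert (0 <= eta / tilde_pi K gamma p i <= 1/2).
    { split; [apply Rlt_le, Rdiv_lt_0_compat; lra|].
      apply (Rmult_le_reg_r (tilde_pi K gamma p i)); [lra|].
      unfold Rdiv; rewrite Rmult_assoc, Rinv_l; lra. }
    split; [apply Rmult_le_pos|]; nra. }
  assert (Havg : 0 <= avg).
  { unfold avg; rewrite <- (Rmult_0_r (INR K)), <- fsum_const.
    apply fsum_le; intros i Hi; specialize (Hpos i Hi); specialize (Hlhat i Hi).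
    apply Rmult_le_pos; nra. }
  split.
  - intros i Hi; specialize (Hpos i Hi); specialize (Hlhat i Hi).
    apply Rmult_lt_0_compat; nra.
  - rewrite (fsum_ext K _ (fun i => (1 + eta * avg) * p i + (- eta) * (p i * lhat i)))
      by (intros i _; ring).
    rewrite fsum_plus, !fsum_scal, Hsum; fold avg; ring.
Qed.

Lemma wsu_expect_le (f g : (nat -> R) -> R) :
  (forall q, pos_simplex K q -> f q <= g q) ->
  forall n t p, pos_simplex K p ->
  wsu_expect K eta gamma loss n t p f <= wsu_expect K eta gamma loss n t p g.
Proof.
  intros Hfg n; induction n as [|n IH]; intros t p Hp; simpl; [auto|].
  apply fsum_le; intros i Hi; apply Rmult_le_compat_l.
  - apply tilde_pi_nonneg; assumption.
  - apply IH, wsu_update_simplex, Hp.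
Qed.

Lemma wsu_expect_affine (a b : R) (f : (nat -> R) -> R) :
  forall n t p, pos_simplex K p ->
  wsu_expect K eta gamma loss n t p (fun q => a + b * f q)
  = a + b * wsu_expect K eta gamma loss n t p f.
Proof.
  intros n; induction n as [|n IH]; intros t p Hp; simpl; [reflexivity|].
  rewrite (fsum_ext K _ (fun i => a * tilde_pi K gamma p i
             + b * (tilde_pi K gamma p i * wsu_expect K eta gamma loss n (S t)
                      (wsu_update K eta gamma loss t p i) f))).
  - rewrite fsum_plus, !fsum_scal, fsum_tilde_pi by (apply Hp); ring.
  - intros i _; rewrite IH by (apply wsu_update_simplex, Hp); ring.
Qed.

Lemma wsu_expect_drift (V : (nat -> R) -> R) (c : R) (n t : nat) :
  0 <= c ->
  (forall s q, (t <= s < t + n)%nat -> pos_simplex K q ->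
     fsum K (fun i => tilde_pi K gamma q i * V (wsu_update K eta gamma loss s q i)) <= c * V q) ->
  forall p, pos_simplex K p -> wsu_expect K eta gamma loss n t p V <= c ^ n * V p.
Proof.
  intros Hc; revert t; induction n as [|n IH]; intros t Hdrift p Hp; simpl; [lra|].
  apply Rle_trans with
    (fsum K (fun i => c ^ n * (tilde_pi K gamma p i * V (wsu_update K eta gamma loss t p i)))).
  - apply fsum_le; intros i Hi.
    rewrite <- Rmult_assoc, (Rmult_comm (c ^ n)), Rmult_assoc.
    apply Rmult_le_compat_l.
    + apply tilde_pi_nonneg; assumption.
    + apply IH; [intros s q Hs; apply Hdrift; lia|apply wsu_update_simplex, Hp].
  - rewrite fsum_scal, (Rmult_comm c), Rmult_assoc.
    apply Rmult_le_compat_l; [apply pow_le, Hc|].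
    apply Hdrift; [lia|exact Hp].
Qed.

End Expectation.

Lemma wsu_expect_add (K : nat) (eta gamma : R) (loss : nat -> nat -> R)
  (f : (nat -> R) -> R) (m n : nat) :
  forall t p, wsu_expect K eta gamma loss (m + n) t p f
  = wsu_expect K eta gamma loss m t p (fun q => wsu_expect K eta gamma loss n (t + m) q f).
Proof.
  induction m as [|m IH]; intros t p; simpl.
  - rewrite Nat.add_0_r; reflexivity.
  - apply fsum_ext; intros i _; rewrite IH, Nat.add_succ_r; reflexivity.
Qed.

Definition odds (p : nat -> R) : R := p 1%nat / p 0%nat.

Section TwoArms.
Variables (eta gamma : R) (loss : nat -> nat -> R) (t : nat) (p : nat -> R).
Hypothesis valid_eta_gamma : valid 2 eta gamma.
Hypothesis p_simplex : pos_simplex 2 p.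

Lemma two_arm_bounds :
  0 < p 0%nat /\ 0 < p 1%nat /\ p 0%nat + p 1%nat = 1 /\
  2 * eta <= tilde_pi 2 gamma p 0 /\ 2 * eta <= tilde_pi 2 gamma p 1 /\
  tilde_pi 2 gamma p 0 + tilde_pi 2 gamma p 1 = 1.
Proof.
  destruct p_simplex as [Hpos Hsum].
  pose proof (Hpos 0%nat ltac:(lia)); pose proof (Hpos 1%nat ltac:(lia)).
  pose proof (fsum_tilde_pi 2 gamma ltac:(lia) p Hsum) as Hab.
  rewrite fsum2 in Hsum, Hab.
  repeat split; try lra; apply tilde_pi_ge; auto; lra.
Qed.

Lemma odds_drift_loss0 :
  loss t 0%nat = 1 -> loss t 1%nat = 0 ->
  fsum 2 (fun i => tilde_pi 2 gamma p i * odds (wsu_update 2 eta gamma loss t p i))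
  <= (1 + 2 * eta) * odds p.
Proof.
  intros l0 l1; destruct two_arm_bounds as (H0 & H1 & Hsum & Ha & Hb & Hab).
  destruct valid_eta_gamma as (He & _).
  rewrite fsum2; unfold odds, wsu_update; rewrite !fsum2; cbn -[Rdiv Rmult Rminus Rplus tilde_pi].
  rewrite l0, l1.
  set (a := tilde_pi 2 gamma p 0) in *; set (b := tilde_pi 2 gamma p 1) in *.
  set (p0 := p 0%nat) in *; set (p1 := p 1%nat) in *.
  (* drawing arm 0 multiplies the odds by (a + eta p0) / (a - eta p1); drawing arm 1 changes nothing *)
  assert (Hd : 0 < a - eta * p1) by nra.
  assert (Hkey : a * (a + eta * p0) <= (a + 2 * eta) * (a - eta * p1)).
  { assert (0 <= eta * (a - 2 * eta * p1)) by (apply Rmult_le_pos; nra).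
    replace p0 with (1 - p1) by lra; nra. }
  replace (a * _ + _) with (p1 / p0 * (a * (a + eta * p0) / (a - eta * p1) + b)).
  2:{ replace p1 with (1 - p0) in * by lra. field; repeat split; lra. }
  assert (a * (a + eta * p0) / (a - eta * p1) <= a + 2 * eta).
  { apply (Rmult_le_reg_r (a - eta * p1)); [lra|].
    unfold Rdiv; rewrite Rmult_assoc, Rinv_l; lra. }
  assert (0 < p1 / p0) by (apply Rdiv_lt_0_compat; lra).
  rewrite (Rmult_comm (1 + 2 * eta)); apply Rmult_le_compat_l; lra.
Qed.

Lemma odds_drift_loss1 :
  loss t 0%nat = 0 -> loss t 1%nat = 1 ->
  fsum 2 (fun i => tilde_pi 2 gamma p i * odds (wsu_update 2 eta gamma loss t p i))
  <= (1 - eta / 2) * odds p.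
Proof.
  intros l0 l1; destruct two_arm_bounds as (H0 & H1 & Hsum & Ha & Hb & Hab).
  destruct valid_eta_gamma as (He & _).
  rewrite fsum2; unfold odds, wsu_update; rewrite !fsum2; cbn -[Rdiv Rmult Rminus Rplus tilde_pi].
  rewrite l0, l1.
  set (a := tilde_pi 2 gamma p 0) in *; set (b := tilde_pi 2 gamma p 1) in *.
  set (p0 := p 0%nat) in *; set (p1 := p 1%nat) in *.
  assert (Hd : 0 < b + eta * p1) by nra.
  assert (Hkey : b * (b - eta * p0) <= (b - eta / 2) * (b + eta * p1)).
  { assert (0 <= eta * (b - eta * p1)) by (apply Rmult_le_pos; nra).
    replace p0 with (1 - p1) by lra; nra. }
  replace (a * _ + _) with (p1 / p0 * (a + b * (b - eta * p0) / (b + eta * p1))).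
  2:{ replace p1 with (1 - p0) in * by lra. field; repeat split; nra. }
  assert (b * (b - eta * p0) / (b + eta * p1) <= b - eta / 2).
  { apply (Rmult_le_reg_r (b + eta * p1)); [lra|].
    unfold Rdiv; rewrite Rmult_assoc, Rinv_l; lra. }
  assert (0 < p1 / p0) by (apply Rdiv_lt_0_compat; lra).
  rewrite (Rmult_comm (1 - eta / 2)); apply Rmult_le_compat_l; lra.
Qed.

End TwoArms.

Lemma two_phase_bounds (T t i : nat) : 0 <= two_phase T t i <= 1.
Proof. unfold two_phase; destruct (Nat.leb t _), (Nat.eqb i 0); lra. Qed.

Lemma two_phase_early (T t : nat) :
  (t <= T / 100)%nat -> two_phase T t 0%nat = 1 /\ two_phase T t 1%nat = 0.
Proof. intros Ht; unfold two_phase; rewrite (proj2 (Nat.leb_le _ _) Ht); auto. Qed.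

Lemma two_phase_late (T t : nat) :
  (T / 100 < t)%nat -> two_phase T t 0%nat = 0 /\ two_phase T t 1%nat = 1.
Proof. intros Ht; unfold two_phase; rewrite (proj2 (Nat.leb_gt _ _) Ht); auto. Qed.

Lemma two_phase_expected_odds (T m : nat) (eta gamma : R) :
  valid 2 eta gamma ->
  wsu_expect 2 eta gamma (two_phase T) (T / 100 + m) 1 (uniform 2) odds
  <= (1 + 2 * eta) ^ (T / 100) * (1 - eta / 2) ^ m.
Proof.
  intros Hval; pose proof Hval as (He & _).
  assert (HK : (0 < 2)%nat) by lia.
  pose proof (uniform_simplex 2 HK) as Hunif.
  rewrite wsu_expect_add.
  apply Rle_trans with (wsu_expect 2 eta gamma (two_phase T) (T / 100) 1 (uniform 2)
                          (fun q => 0 + (1 - eta / 2) ^ m * odds q)).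
  - apply (wsu_expect_le 2 eta gamma _ HK Hval (two_phase_bounds T)); [|exact Hunif].
    intros q Hq; rewrite Rplus_0_l.
    apply (wsu_expect_drift 2 eta gamma _ HK Hval (two_phase_bounds T)); [lra| |exact Hq].
    intros s q' Hs Hq'; apply odds_drift_loss1; auto; apply two_phase_late; lia.
  - rewrite (wsu_expect_affine 2 eta gamma _ HK Hval (two_phase_bounds T)) by exact Hunif.
    rewrite Rplus_0_l, Rmult_comm.
    apply Rmult_le_compat_r; [apply pow_le; lra|].
    eapply Rle_trans.
    + apply (wsu_expect_drift 2 eta gamma _ HK Hval (two_phase_bounds T) _ (1 + 2 * eta));
        [lra| |exact Hunif].
      intros s q Hs Hq; apply odds_drift_loss0; auto; apply two_phase_early; lia.
    + unfold odds, uniform; simpl; right; field.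
Qed.

Lemma indic_arm1_quarter_ge (p : nat -> R) :
  pos_simplex 2 p -> 1 + (- / 3) * odds p <= indic arm1_quarter arm1_quarter_dec p.
Proof.
  intros [Hpos Hsum]; rewrite fsum2 in Hsum.
  pose proof (Hpos 0%nat ltac:(lia)); pose proof (Hpos 1%nat ltac:(lia)).
  unfold indic, arm1_quarter_dec, odds; destruct (Rle_dec (1 / 4) (p 0%nat)).
  - assert (0 < p 1%nat / p 0%nat) by (apply Rdiv_lt_0_compat; lra); lra.
  - assert (p 1%nat / p 0%nat * p 0%nat = p 1%nat) by (field; lra); nra.
Qed.

Lemma exp_le_compat (x y : R) : x <= y -> exp x <= exp y.
Proof. intros [Hlt|Heq]; [left; apply exp_increasing, Hlt|right; rewrite Heq; reflexivity]. Qed.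

Lemma exp_nat_mult (n : nat) (x : R) : exp (INR n * x) = exp x ^ n.
Proof.
  induction n as [|n IH]; [simpl; rewrite Rmult_0_l; apply exp_0|].
  rewrite S_INR, Rmult_plus_distr_r, Rmult_1_l, exp_plus, IH; simpl; ring.
Qed.

Lemma pow_le_exp (n : nat) (x : R) : -1 <= x -> (1 + x) ^ n <= exp (INR n * x).
Proof.
  intros Hx; rewrite exp_nat_mult; apply pow_incr.
  pose proof (exp_ineq1_le x); lra.
Qed.

Lemma exp_neg_le_inv_pow6 (u : R) : 10 ^ 13 <= u -> exp (- (2 * u / 25)) <= 6 / u ^ 6.
Proof.
  intros Hu.
  assert (Hu6 : 0 < u ^ 6) by (apply pow_lt; lra).
  (* exp y >= y at y = 2u/175, raised to the 7th power *)
  assert (Hexp7 : (2 * u / 175) ^ 7 <= exp (2 * u / 25)).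
  { replace (2 * u / 25) with (INR 7 * (2 * u / 175)) by (simpl; field).
    rewrite exp_nat_mult; apply pow_incr.
    pose proof (exp_ineq1_le (2 * u / 175)); lra. }
  assert (Hpoly : u ^ 6 <= 6 * (2 * u / 175) ^ 7).
  { replace (6 * (2 * u / 175) ^ 7) with ((6 * (2 / 175) ^ 7 * u) * u ^ 6) by (simpl; field).
    assert (1 <= 6 * (2 / 175) ^ 7 * u) by (simpl; lra).
    nra. }
  rewrite exp_Ropp.
  pose proof (exp_pos (2 * u / 25)).
  apply (Rmult_le_reg_r (exp (2 * u / 25) * u ^ 6)); [nra|].
  field_simplify; lra.
Qed.

Lemma two_phase_decay_bound (T k : nat) (eta : R) :
  T = (100 * k)%nat -> 10 ^ 40 <= INR T -> 0 < eta < 1/2 -> eta >= Rpower (INR T) (-(2/3)) ->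
  / 3 * ((1 + 2 * eta) ^ k * (1 - eta / 2) ^ (20 * k)) <= 2 / INR T ^ 2.
Proof.
  intros HTk HT He Heta.
  set (u := Rpower (INR T) (1/3)).
  assert (Hu0 : 0 < u) by (unfold u, Rpower; apply exp_pos).
  assert (Hu3 : u ^ 3 = INR T).
  { unfold u; rewrite <- Rpower_pow by (unfold Rpower; apply exp_pos).
    rewrite Rpower_mult; replace (1/3 * INR 3) with 1 by (simpl; field).
    apply Rpower_1; lra. }
  assert (Hu : 10 ^ 13 <= u).
  { destruct (Rle_lt_dec (10 ^ 13) u) as [|Hlt]; [assumption|].
    assert (u ^ 3 <= (10 ^ 13) ^ 3) by (apply pow_incr; lra).
    simpl in *; lra. }
  assert (HetaT : u <= eta * INR T).
  { unfold u; replace (1/3) with (-(2/3) + 1) by field.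
    rewrite Rpower_plus, Rpower_1 by lra; apply Rmult_le_compat_r; lra. }
  assert (Hk : INR T = 100 * INR k) by (rewrite HTk, mult_INR; simpl; ring).
  assert (Hdecay : (1 + 2 * eta) ^ k * (1 - eta / 2) ^ (20 * k) <= exp (- (2 * u / 25))).
  { eapply Rle_trans.
    - apply Rmult_le_compat; try (apply pow_le; lra); apply pow_le_exp; lra.
    - rewrite <- exp_plus, mult_INR; apply exp_le_compat; simpl (INR 20); nra. }
  rewrite <- Hu3, <- pow_mult; simpl (3 * 2)%nat.
  pose proof (exp_neg_le_inv_pow6 u Hu); lra.
Qed.

Theorem mainTheorem17 (eta gamma : nat -> R) :
  (forall T : nat, (0 < T)%nat -> (T mod 100 = 0)%nat ->
     valid 2 (eta T) (gamma T) /\ nontrivial T (eta T) (gamma T)) ->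
  exists T0 : nat, forall T : nat, (T0 <= T)%nat -> (0 < T)%nat -> (T mod 100 = 0)%nat ->
    wsu_prob 2 (eta T) (gamma T) (two_phase T) (T / 100 + 2 * T / 10)
      arm1_quarter arm1_quarter_dec
    >= 1 - 2 / (INR T ^ 2).
Proof.
  intros Hparams; exists (10 ^ 40)%nat; intros T HT0 HT Hmod.
  destruct (Hparams T HT Hmod) as [Hval [Heta _]]; pose proof Hval as (He & _).
  assert (HTbig : 10 ^ 40 <= INR T) by (apply le_INR in HT0; rewrite pow_INR in HT0; simpl in *; lra).
  assert (HTk : T = (100 * (T / 100))%nat) by (pose proof (Nat.div_mod_eq T 100); lia).
  assert (Hphase2 : (2 * T / 10 = 20 * (T / 100))%nat).
  { rewrite HTk at 1; replace (2 * (100 * (T / 100)))%nat with (20 * (T / 100) * 10)%nat by lia.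
    apply Nat.div_mul; lia. }
  unfold wsu_prob; rewrite Hphase2; apply Rle_ge.
  pose proof (two_phase_expected_odds T (20 * (T / 100)) _ _ Hval) as Hodds.
  pose proof (two_phase_decay_bound T (T / 100) (eta T) HTk HTbig He Heta) as Htail.
  (* Markov's inequality for the odds *)
  eapply Rle_trans; [|apply (wsu_expect_le 2 _ _ _ ltac:(lia) Hval (two_phase_bounds T)
                               (fun q => 1 + (- / 3) * odds q))].
  - rewrite (wsu_expect_affine 2 _ _ _ ltac:(lia) Hval (two_phase_bounds T)).
    + lra.
    + apply uniform_simplex; lia.
  - exact indic_arm1_quarter_ge.
  - apply uniform_simplex; lia.
Qed.
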